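(* Let $\mathbb{H}_1,\mathbb{H}_2$ be Hilbert spaces (both real or both complex). Let $T\in \mathbb{L}(\mathbb{H}_1,\mathbb{H}_2)$ with $\|T\|=1$ be such that $M_T=S_{H_0}$, where $H_0$ is a finite-dimensional subspace of $\mathbb{H}_1$ with $\dim(H_0)=n$, and $\|T|_{H_0^\perp}\|<1$. Then $T$ is $n^2$-smooth if $\mathbb{H}_1,\mathbb{H}_2$ are complex, and $T$ is $\binom{n+1}{2}$-smooth if $\mathbb{H}_1,\mathbb{H}_2$ are real.
   Context: $\mathbb{L}(\mathbb{X},\mathbb{Y})$ denotes the space of bounded linear operators between Banach spaces with the operator norm. $S_{\mathbb{X}}$ is the unit sphere of $\mathbb{X}$. For $T\in\mathbb{L}(\mathbb{X},\mathbb{Y})$, the norm attainment set is $M_T=\{x\in S_{\mathbb{X}}:\|Tx\|=\|T\|\}$. For a Banach space $\mathbb{Z}$ and $z\in S_{\mathbb{Z}}$, let $J(z)=\{f\in \mathbb{Z}^*:\|f\|=1,\ f(z)=1\}$; $z$ is called $k$-smooth if $\dim \operatorname{span} J(z)=k$. An operator $T$ of norm one is $k$-smooth if it is a $k$-smooth point of the unit sphere of $\mathbb{Z}=\mathbb{L}(\mathbb{H}_1,\mathbb{H}_2)$. *)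

(* MathComp-Analysis normed modules over a numFieldType K.
   K will be instantiated with R : realType (real case) or R[i] (complex case). *)
From mathcomp Require Import all_boot all_order all_algebra.
From mathcomp Require Import all_classical all_reals all_analysis.
From mathcomp Require Export complex.
Import numFieldNormedType.Exports.
Import Order.TTheory GRing.Theory Num.Theory.

Set Implicit Arguments.
Unset Strict Implicit.
Unset Printing Implicit Defensive.

Local Open Scope classical_set_scope.
Local Open Scope ring_scope.

Section Defs.
Variable K : numFieldType.

Definition is_lub (S : set K) (s : K) : Prop :=
  (forall x, S x -> x <= s) /\ (forall b, (forall x, S x -> x <= b) -> s <= b).

(* ip is an inner product on V (linear in the first argument,
   conj-symmetric, where conj is the field conjugation: id on R, conjC on C)
   inducing the norm of V. Together with completeness of V
   (V : completeNormedModType K) this makes (V, ip) a Hilbert space. *)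
Definition inner_product (conj : K -> K) (V : normedModType K)
    (ip : V -> V -> K) : Prop :=
  [/\ forall a x y z, ip (a *: x + y) z = a * ip x z + ip y z,
      forall x y, ip x y = conj (ip y x)
    & forall x, ip x x = `|x| ^+ 2].

Variables V1 V2 : normedModType K.

Definition lin_map (A : V1 -> V2) : Prop :=
  forall a x y, A (a *: x + y) = a *: A x + A y.

Definition bdd_op : set (V1 -> V2) :=
  [set A | lin_map A /\ exists M : K, forall x, `|A x| <= M * `|x|].

Definition opnorm_is (A : V1 -> V2) (c : K) : Prop :=
  is_lub [set r | exists x, `|x| <= 1 /\ r = `|A x|] c.

Definition op_ball : set (V1 -> V2) :=
  [set A | bdd_op A /\ forall x, `|x| <= 1 -> `|A x| <= 1].

Definition functional := (V1 -> V2) -> K.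

(* linear functional on L(V1,V2) (only its values on L(V1,V2) matter) *)
Definition lin_functional (f : functional) : Prop :=
  forall a A B, bdd_op A -> bdd_op B ->
    f (fun x => a *: A x + B x) = a * f A + f B.

Definition J (T : V1 -> V2) : set functional :=
  [set f | [/\ lin_functional f,
               is_lub [set r | exists A, op_ball A /\ r = `|f A|] 1
             & f T = 1]].

(* g lies in the linear span of the set of functionals S
   (functionals identified when they agree on L(V1,V2)) *)
Definition in_span (S : set functional) (g : functional) : Prop :=
  exists m (s : 'I_m -> functional) (c : 'I_m -> K),
    (forall j, S (s j)) /\
    (forall A, bdd_op A -> g A = \sum_(j < m) c j * s j A).

Definition lin_indep_fam k (g : 'I_k -> functional) : Prop :=
  forall c : 'I_k -> K,
    (forall A, bdd_op A -> \sum_(i < k) c i * g i A = 0) -> forall i, c i = 0.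

Definition dim_span_is (S : set functional) (k : nat) : Prop :=
  exists g : 'I_k -> functional,
    [/\ forall i, in_span S (g i),
        lin_indep_fam g
      & forall f, S f -> in_span [set g i | i in [set: 'I_k]] f].

Definition k_smooth (T : V1 -> V2) (k : nat) : Prop :=
  [/\ bdd_op T, opnorm_is T 1 & dim_span_is (J T) k].

Definition span_vec n (e : 'I_n -> V1) : set V1 :=
  [set x | exists c : 'I_n -> K, x = \sum_(i < n) c i *: e i].

Definition vec_indep n (e : 'I_n -> V1) : Prop :=
  forall c : 'I_n -> K, \sum_(i < n) c i *: e i = 0 -> forall i, c i = 0.

Definition orth_compl (ip : V1 -> V1 -> K) (H : set V1) : set V1 :=
  [set y | forall x, H x -> ip x y = 0].

(* Hypotheses of Theorem 2.1: H1 = (V1,ip1), H2 = (V2,ip2) Hilbert spaces,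
   T in L(H1,H2), ||T|| = 1, H0 = span e with dim H0 = n (e a basis),
   M_T = S_{H0}, and ||T restricted to H0^perp|| < 1. *)
Definition thm2p1_hyp (conj : K -> K) (ip1 : V1 -> V1 -> K)
    (ip2 : V2 -> V2 -> K) (T : V1 -> V2) n (e : 'I_n -> V1) : Prop :=
  [/\ inner_product conj ip1 /\ inner_product conj ip2,
      bdd_op T /\ opnorm_is T 1,
      vec_indep e,
      [set x | `|x| = 1 /\ `|T x| = 1] = [set x | span_vec e x /\ `|x| = 1]
    & exists s, s < 1 /\
        is_lub [set r | exists y, orth_compl ip1 (span_vec e) y /\
                                  `|y| <= 1 /\ r = `|T y|] s].

End Defs.

(* On the span H0 of e the operator T is an isometry, and it maps the orthogonal
   complement of H0 into the orthogonal complement of T(H0).  Splitting x = u + v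
   along H0 and using |T v| <= s |v| with s < 1 gives |T + tB| <= 1 + C t^2 for every
   bounded B with <B u, T u> = 0 on H0, so every f in J(T) vanishes on such B.
   Hence J(T) spans the same space as the functionals A |-> <A u, T u> (u a unit
   vector of H0), which belong to J(T).  By polarization this space is spanned by the
   n^2 entries A |-> <A e_i, T e_j> in the complex case, and by their n(n+1)/2
   symmetrizations in the real case; rank-one operators biorthogonal to these
   functionals show that they are linearly independent. *)

From mathcomp Require Import all_boot all_order all_algebra.
From mathcomp Require Import all_classical all_reals all_analysis.
From mathcomp Require Import complex.
From mathcomp Require Import ring.
Import numFieldNormedType.Exports.
Import Order.TTheory GRing.Theory Num.Theory.
Local Open Scope ring_scope.
Local Open Scope classical_set_scope.

Set Implicit Arguments.
Unset Strict Implicit.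

Lemma eq0_le_mul_pos (K : numFieldType) (a b : K) : 0 <= a -> 0 <= b ->
  (forall t, 0 < t -> a <= t * b) -> a = 0.
Proof.
move=> a0 b0 h; apply/eqP; rewrite eq_le a0 andbT.
apply/ler_addgt0Pr => t t0; rewrite add0r.
have b1 : 0 < b + 1 by rewrite ltr_wpDl.
apply: le_trans (h _ (divr_gt0 t0 b1)) _.
by rewrite mulrAC ler_pdivrMr // ler_pM2l // lerDl.
Qed.

Lemma sum_antisym_quad0 (K : numFieldType) n (c : 'I_n -> K) (a : 'I_n -> 'I_n -> K) :
  (forall i j, a i j + a j i = 0) -> \sum_(i < n) \sum_(j < n) c i * c j * a i j = 0.
Proof.
move=> anti; set S := \sum_(i < n) _.
have : S + S = 0.
  rewrite {1}/S exchange_big -big_split big1 // => i _ /=.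
  rewrite -big_split big1 // => j _ /=.
  by rewrite [c j * c i]mulrC -mulrDr addrC anti mulr0.
by rewrite -mulr2n => /eqP; rewrite mulrn_eq0 => /eqP.
Qed.

Lemma perturb_sqr_ineq (K : numFieldType) (a V s t M : K) :
  0 <= s < 1 -> 0 <= V -> 0 <= t -> 0 <= M -> a + V ^+ 2 <= 1 ->
  a + (s * V + t * M) ^+ 2 + (t * M * V) *+ 2
    <= 1 + (M ^+ 2 *+ 2 / (1 - s)) * t ^+ 2.
Proof.
move=> /andP[s0 s1] V0 t0 M0 aV; rewrite -subr_ge0.
have s1' : 0 < 1 - s by rewrite subr_gt0.
have -> : 1 + (M ^+ 2 *+ 2 / (1 - s)) * t ^+ 2
    - (a + (s * V + t * M) ^+ 2 + (t * M * V) *+ 2)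
    = (1 - (a + V ^+ 2)) + (1 + s) * ((1 - s) * V - t * M) ^+ 2 / (1 - s).
  by field; rewrite lt0r_neq0.
apply: addr_ge0; first by rewrite subr_ge0.
apply: divr_ge0 (ltW s1'); apply: mulr_ge0; first exact: addr_ge0.
rewrite -realEsqr; apply: rpredB; apply: rpredM; apply: ger0_real => //.
exact: ltW.
Qed.

Lemma card_lower_triangle n :
  #|{: {p : 'I_n * 'I_n | (p.2 <= p.1)%N}}| = 'C(n.+1, 2).
Proof.
rewrite card_sig -sum1_card.
rewrite (eq_bigl (fun p : 'I_n * 'I_n => predT p.1 && (p.2 <= p.1)%N)) //.
rewrite -(pair_big_dep predT (fun (i j : 'I_n) => (j <= i)%N) (fun _ _ => 1%N)) /=.
rewrite (eq_bigr (fun i : 'I_n => i.+1)) => [|i _].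
  by rewrite -bin2_sum big_nat_recl // -(big_mkord xpredT (fun i => i.+1)).
rewrite -(big_mkord (fun j => j <= i)%N (fun _ => 1%N)).
rewrite (eq_bigl (fun j => true && (j < i.+1)%N)) //.
by rewrite -big_nat_widen ?ltn_ord // sum_nat_const_nat subn0 muln1.
Qed.

(** * Bounded operators and functionals on them *)

Section BoundedOperators.
Variables (K : numFieldType) (V1 V2 : normedModType K).

Lemma lin_map0 (A : V1 -> V2) : lin_map A -> A 0 = 0.
Proof.
move=> lA; have := lA 1 0 0; rewrite scaler0 addr0 scale1r => h.
by apply: (@addrI _ (A 0)); rewrite addr0 -h.
Qed.

Lemma lin_mapD (A : V1 -> V2) x y : lin_map A -> A (x + y) = A x + A y.
Proof. by move=> lA; have := lA 1 x y; rewrite !scale1r. Qed.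

Lemma lin_mapZ (A : V1 -> V2) a x : lin_map A -> A (a *: x) = a *: A x.
Proof. by move=> lA; have := lA a x 0; rewrite !addr0 lin_map0 ?addr0. Qed.

Lemma lin_map_sum (A : V1 -> V2) I (r : seq I) (c : I -> K) (f : I -> V1) :
  lin_map A -> A (\sum_(i <- r) c i *: f i) = \sum_(i <- r) c i *: A (f i).
Proof.
move=> lA; elim: r => [|i r IH]; first by rewrite !big_nil lin_map0.
by rewrite !big_cons lin_mapD // lin_mapZ // IH.
Qed.

Lemma bdd_op_lin (A : V1 -> V2) : bdd_op A -> lin_map A.
Proof. by case. Qed.

Lemma bdd_op_bound (A : V1 -> V2) : bdd_op A ->
  exists2 M, 0 <= M & forall x, `|A x| <= M * `|x|.
Proof.
case=> _ [M hM]; exists `|M| => // x.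
have hx : 0 <= M * `|x| := le_trans (normr_ge0 _) (hM x).
by rewrite -[X in _ <= _ * X]normr_id -normrM ger0_norm // hM.
Qed.

Lemma bdd_op0 : bdd_op (fun _ : V1 => (0 : V2)).
Proof.
split; first by move=> a x y; rewrite scaler0 addr0.
by exists 0 => x; rewrite normr0 mul0r.
Qed.

Lemma bdd_op_comb a (A B : V1 -> V2) : bdd_op A -> bdd_op B ->
  bdd_op (fun x => a *: A x + B x).
Proof.
move=> hA hB; have lA := bdd_op_lin hA; have lB := bdd_op_lin hB.
have [MA MA0 bA] := bdd_op_bound hA; have [MB MB0 bB] := bdd_op_bound hB.
split.
  move=> b x y; rewrite lA lB !scalerDr !scalerA mulrC -!addrA.
  by congr (_ + _); rewrite addrCA.
exists (`|a| * MA + MB) => x; apply: le_trans (ler_normD _ _) _.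
by rewrite normrZ mulrDl -mulrA lerD // ler_wpM2l.
Qed.

Lemma bdd_opZ a (A : V1 -> V2) : bdd_op A -> bdd_op (fun x => a *: A x).
Proof.
move=> hA; have := bdd_op_comb a hA bdd_op0.
by congr bdd_op; apply: funext => x; rewrite addr0.
Qed.

Lemma bdd_op_sum I (r : seq I) (c : I -> K) (S : I -> V1 -> V2) :
  (forall i, bdd_op (S i)) -> bdd_op (fun x => \sum_(i <- r) c i *: S i x).
Proof.
move=> hS; elim: r => [|i r IH].
  by under eq_fun do rewrite big_nil; exact: bdd_op0.
under eq_fun do rewrite big_cons; exact: bdd_op_comb.
Qed.

Lemma unit_direction (x : V1) : x != 0 ->
  `| `|x|^-1 *: x| = 1 /\ x = `|x| *: (`|x|^-1 *: x).
Proof.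
rewrite -normr_eq0 => nx; split; first by rewrite normrZ normfV normr_id mulVf.
by rewrite scalerA mulfV // scale1r.
Qed.

Lemma lin_map_cone_bound (A : V1 -> V2) (P : set V1) c : lin_map A ->
  (forall a x, P x -> P (a *: x)) ->
  (forall x, P x -> `|x| <= 1 -> `|A x| <= c) ->
  forall x, P x -> `|A x| <= c * `|x|.
Proof.
move=> lA PZ hc x Px; have [->|x0] := eqVneq x 0.
  by rewrite lin_map0 // !normr0 mulr0.
have [n1 {1}->] := unit_direction x0.
rewrite lin_mapZ // normrZ normr_id mulrC ler_wpM2r // hc ?n1 //; exact: PZ.
Qed.

Lemma lin_functional0 (f : functional V1 V2) : lin_functional f -> f (fun _ => 0) = 0.
Proof.
move=> lf; have := lf 1 _ _ bdd_op0 bdd_op0; rewrite mul1r.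
under eq_fun do rewrite scaler0 addr0.
by move=> h; apply: (@addrI _ (f (fun _ => 0))); rewrite addr0 -h.
Qed.

Lemma lin_functionalZ (f : functional V1 V2) a A : lin_functional f -> bdd_op A ->
  f (fun x => a *: A x) = a * f A.
Proof.
move=> lf hA; have := lf a _ _ hA bdd_op0; rewrite lin_functional0 // addr0.
by under eq_fun do rewrite addr0.
Qed.

Lemma lin_functional_sum (f : functional V1 V2) I (r : seq I) (c : I -> K)
    (S : I -> V1 -> V2) : lin_functional f -> (forall i, bdd_op (S i)) ->
  f (fun x => \sum_(i <- r) c i *: S i x) = \sum_(i <- r) c i * f (S i).
Proof.
move=> lf hS; elim: r => [|i r IH].
  by under eq_fun do rewrite big_nil; rewrite big_nil lin_functional0.
under eq_fun do rewrite big_cons.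
by rewrite lf ?IH ?big_cons //; exact: bdd_op_sum.
Qed.

Lemma in_span_mem (S : set (functional V1 V2)) g : S g -> in_span S g.
Proof.
move=> Sg; exists 1%N, (fun _ => g), (fun _ => 1).
by split=> // A _; rewrite big_ord1 mul1r.
Qed.

Lemma in_span_eq (S : set (functional V1 V2)) g h : in_span S g ->
  (forall A, bdd_op A -> h A = g A) -> in_span S h.
Proof.
by move=> [m [s [c [Ss gs]]]] hg; exists m, s, c; split=> // A hA; rewrite hg ?gs.
Qed.

Lemma in_span0 (S : set (functional V1 V2)) : in_span S (fun _ => 0).
Proof.
by exists 0%N, (fun _ _ => 0), (fun _ => 0); split=> [[] //|A _]; rewrite big_ord0.
Qed.

Lemma in_span_comb (S : set (functional V1 V2)) a g1 g2 :
  in_span S g1 -> in_span S g2 -> in_span S (fun A => a * g1 A + g2 A).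
Proof.
move=> [m1 [s1 [c1 [S1 h1]]]] [m2 [s2 [c2 [S2 h2]]]].
exists (m1 + m2)%N,
  (fun i => match fintype.split i with inl j => s1 j | inr j => s2 j end),
  (fun i => match fintype.split i with inl j => a * c1 j | inr j => c2 j end).
split=> [i|A hA]; first by case: (fintype.split i).
rewrite big_split_ord /= h1 // h2 // mulr_sumr.
congr (_ + _); apply: eq_bigr => j _; first by rewrite (unsplitK (inl _ j)) mulrA.
by rewrite (unsplitK (inr _ j)).
Qed.

Lemma in_spanZ (S : set (functional V1 V2)) a g :
  in_span S g -> in_span S (fun A => a * g A).
Proof.
move=> Sg; apply: in_span_eq (in_span_comb a Sg (in_span0 S)) _ => A _.
by rewrite addr0.
Qed.

Lemma dim_span_is_biorthogonal (F : set (functional V1 V2)) (I : finType)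
    (g : I -> functional V1 V2) (S : I -> V1 -> V2) :
  (forall f, F f -> lin_functional f) ->
  (forall p, lin_functional (g p)) -> (forall p, bdd_op (S p)) ->
  (forall p q, g p (S q) = (p == q)%:R) ->
  (forall p, in_span F (g p)) ->
  (forall f A, F f -> bdd_op A -> (forall p, g p A = 0) -> f A = 0) ->
  dim_span_is F #|I|.
Proof.
move=> Flin glin Sbdd gS gF Fker.
have gSE (p q : 'I_#|I|) : g (enum_val p) (S (enum_val q)) = (p == q)%:R.
  by rewrite gS (inj_eq enum_val_inj).
exists (g \o enum_val); split=> [p|c hc p|f Ff]; first exact: gF.
  have := hc _ (Sbdd (enum_val p)); rewrite (bigD1 p) //= gSE eqxx mulr1.
  by rewrite big1 ?addr0 // => q /negbTE qp; rewrite /= gSE qp mulr0.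
exists #|I|, (g \o enum_val), (fun p => f (S (enum_val p))).
split=> [p|A hA]; first by exists p.
have lf := Flin f Ff.
pose P x := \sum_(p < #|I|) g (enum_val p) A *: S (enum_val p) x.
have hP : bdd_op P by exact: bdd_op_sum.
have fAP : f (fun x => (-1) *: P x + A x) = 0.
  apply: Fker => //; first exact: bdd_op_comb.
  move=> q; rewrite -(enum_rankK q) glin // /P lin_functional_sum // mulN1r.
  rewrite (bigD1 (enum_rank q)) //= gSE eqxx mulr1 big1 ?addr0 ?addNr //.
  by move=> p /negbTE pq; rewrite gSE eq_sym pq mulr0.
move: fAP; rewrite lf // /P lin_functional_sum // mulN1r addrC => /eqP.
rewrite subr_eq0 => /eqP ->.
by apply: eq_bigr => p _; rewrite mulrC.
Qed.

Lemma span_vecZ n (e : 'I_n -> V1) a x : span_vec e x -> span_vec e (a *: x).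
Proof.
case=> c ->; exists (fun i => a * c i); rewrite scaler_sumr.
by apply: eq_bigr => i _; rewrite scalerA.
Qed.

Lemma span_vecD n (e : 'I_n -> V1) x y :
  span_vec e x -> span_vec e y -> span_vec e (x + y).
Proof.
case=> c ->; case=> d ->; exists (fun i => c i + d i); rewrite -big_split.
by apply: eq_bigr => i _; rewrite scalerDl.
Qed.

Lemma span_vec_mem n (e : 'I_n -> V1) i : span_vec e (e i).
Proof.
exists (fun j => (j == i)%:R); rewrite (bigD1 i) //= eqxx scale1r big1 ?addr0 //.
by move=> j /negbTE ->; rewrite scale0r.
Qed.

End BoundedOperators.

(** * Conjugations and inner products *)

Definition conjugation (K : numFieldType) (conj : K -> K) : Prop :=
  [/\ {morph conj : a b / a + b}, {morph conj : a b / a * b}, involutive conj,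
      forall a, a * conj a = `|a| ^+ 2 & forall a, a + conj a \is Num.real].

Lemma conjugation_id (R : realFieldType) : conjugation (fun a : R => a).
Proof. by split=> // a; rewrite ?num_real // -normrX ger0_norm ?sqr_ge0. Qed.

Lemma conjugation_conjC (C : numClosedFieldType) : conjugation (@Num.conj C).
Proof.
have two : (2 : C) != 0 by rewrite pnatr_eq0.
split=> [a b|a b|a|a|a]; rewrite ?rmorphD ?rmorphM ?conjCK ?normCK //.
by rewrite -[_ + _](mulfVK two) -ReE rpredM ?Creal_Re ?realn.
Qed.

Section Conjugation.
Variables (K : numFieldType) (conj : K -> K).
Hypothesis Hconj : conjugation conj.

Lemma conjD a b : conj (a + b) = conj a + conj b. Proof. by case: Hconj. Qed.
Lemma conjM a b : conj (a * b) = conj a * conj b. Proof. by case: Hconj. Qed.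
Lemma conjK a : conj (conj a) = a. Proof. by case: Hconj. Qed.
Lemma mul_conj a : a * conj a = `|a| ^+ 2. Proof. by case: Hconj. Qed.
Lemma add_conj_real a : a + conj a \is Num.real. Proof. by case: Hconj. Qed.

Lemma conj0 : conj 0 = 0.
Proof. by apply: (@addrI _ (conj 0)); rewrite -conjD !addr0. Qed.

Lemma conjN a : conj (- a) = - conj a.
Proof. by apply: (@addrI _ (conj a)); rewrite -conjD !subrr conj0. Qed.

Lemma norm_conj a : `|conj a| = `|a|.
Proof. by apply/eqP; rewrite -(@eqrXn2 _ 2) // -mul_conj conjK mulrC mul_conj. Qed.

Lemma conj_ge0 r : 0 <= r -> conj r = r.
Proof.
move=> r0; have [->|r_neq0] := eqVneq r 0; first exact: conj0.
by apply: (mulfI r_neq0); rewrite mul_conj ger0_norm.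
Qed.

Lemma add_conj_le a : a + conj a <= `|a| *+ 2.
Proof.
apply: le_trans (real_ler_norm (add_conj_real a)) _.
by apply: le_trans (ler_normD _ _) _; rewrite norm_conj mulr2n.
Qed.

Section InnerProduct.
Variables (V : normedModType K) (ip : V -> V -> K).
Hypothesis Hip : inner_product conj ip.

Lemma ipE a x y z : ip (a *: x + y) z = a * ip x z + ip y z. Proof. by case: Hip. Qed.
Lemma ipC x y : ip x y = conj (ip y x). Proof. by case: Hip. Qed.
Lemma ipxx x : ip x x = `|x| ^+ 2. Proof. by case: Hip. Qed.

Lemma ip0l z : ip 0 z = 0.
Proof.
have := ipE 1 0 0 z; rewrite scaler0 addr0 mul1r => h.
by apply: (@addrI _ (ip 0 z)); rewrite addr0 -h.
Qed.

Lemma ip0r z : ip z 0 = 0. Proof. by rewrite ipC ip0l conj0. Qed.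
Lemma ipDl x y z : ip (x + y) z = ip x z + ip y z.
Proof. by rewrite -[x]scale1r ipE mul1r scale1r. Qed.
Lemma ipZl a x z : ip (a *: x) z = a * ip x z.
Proof. by rewrite -[a *: x]addr0 ipE ip0l addr0. Qed.
Lemma ipBl x y z : ip (x - y) z = ip x z - ip y z.
Proof. by rewrite ipDl -scaleN1r ipZl mulN1r. Qed.
Lemma ipDr x y z : ip z (x + y) = ip z x + ip z y.
Proof. by rewrite ipC ipDl conjD -!ipC. Qed.
Lemma ipZr a x z : ip z (a *: x) = conj a * ip z x.
Proof. by rewrite ipC ipZl conjM -ipC. Qed.
Lemma ipBr x y z : ip z (x - y) = ip z x - ip z y.
Proof. by rewrite ipC ipBl conjD conjN -!ipC. Qed.

Lemma ip_suml I (r : seq I) (c : I -> K) (f : I -> V) z :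
  ip (\sum_(i <- r) c i *: f i) z = \sum_(i <- r) c i * ip (f i) z.
Proof.
elim: r => [|i r IH]; first by rewrite !big_nil ip0l.
by rewrite !big_cons ipDl ipZl IH.
Qed.

Lemma ip_sumr I (r : seq I) (c : I -> K) (f : I -> V) z :
  ip z (\sum_(i <- r) c i *: f i) = \sum_(i <- r) conj (c i) * ip z (f i).
Proof.
elim: r => [|i r IH]; first by rewrite !big_nil ip0r.
by rewrite !big_cons ipDr ipZr IH.
Qed.

Lemma normD_sqr x y :
  `|x + y| ^+ 2 = `|x| ^+ 2 + `|y| ^+ 2 + (ip y x + conj (ip y x)).
Proof. by rewrite -!ipxx ipDl !ipDr [ip x y]ipC; ring. Qed.

Lemma cauchy_schwarz x y : `|ip x y| <= `|x| * `|y|.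
Proof.
have [->|y0] := eqVneq y 0; first by rewrite ip0r !normr0 mulr0.
have ny : 0 < `|y| ^+ 2 by rewrite exprn_gt0 // normr_gt0.
set p := ip x y; set l := p / `|y| ^+ 2.
have cl : conj l = conj p / `|y| ^+ 2.
  by rewrite conjM [conj (_^-1)]conj_ge0 // invr_ge0 ltW.
have : 0 <= `|x - l *: y| ^+ 2 by rewrite exprn_ge0.
rewrite -ipxx ipBl !ipBr !ipZl !ipZr !ipxx -/p [ip y x]ipC -/p cl.
have -> : `|x| ^+ 2 - conj p / `|y| ^+ 2 * p
    - (l * conj p - l * (conj p / `|y| ^+ 2 * `|y| ^+ 2))
    = `|x| ^+ 2 - p * conj p / `|y| ^+ 2.
  by rewrite /l; field; rewrite normr_eq0.
rewrite mul_conj subr_ge0 ler_pdivrMr // => h.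
by rewrite -(@ler_sqr _ `|p|) ?nnegrE ?mulr_ge0 // exprMn.
Qed.

Lemma orth_compl0 (H : set V) : orth_compl ip H 0.
Proof. by move=> x _; rewrite ip0r. Qed.

Lemma orth_complZ {H : set V} a v : orth_compl ip H v -> orth_compl ip H (a *: v).
Proof. by move=> Hv x Hx; rewrite ipZr Hv // mulr0. Qed.

Definition gram n (f : 'I_n -> V) : 'M[K]_n := \matrix_(i, j) ip (f i) (f j).

Lemma gram_unit n (f : 'I_n -> V) : vec_indep f -> gram f \in unitmx.
Proof.
move=> hf; rewrite -row_free_unit -kermx_eq0; apply/eqP/row_matrixP => i.
rewrite row0; set c := row i (kermx (gram f)).
have cG : c *m gram f = 0 by rewrite -row_mul mulmx_ker row0.
set w := \sum_(j < n) c 0 j *: f j.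
have w_orth k : ip w (f k) = 0.
  have := congr1 (fun M : 'rV_n => M 0 k) cG; rewrite !mxE => <-.
  by rewrite ip_suml; apply: eq_bigr => j _; rewrite [gram f _ _]mxE.
have w0 : w = 0.
  apply/eqP; rewrite -normr_eq0 -sqrf_eq0 -ipxx {2}/w ip_sumr.
  by rewrite big1 // => j _; rewrite w_orth mulr0.
by apply/rowP => j; rewrite [RHS]mxE (hf _ w0).
Qed.

Definition proj_coord n (f : 'I_n -> V) x : 'rV[K]_n :=
  \row_m ip x (f m) *m invmx (gram f).

Definition dual_basis n (f : 'I_n -> V) l := \sum_(m < n) invmx (gram f) l m *: f m.

Lemma proj_coordD n (f : 'I_n -> V) a x y :
  proj_coord f (a *: x + y) = a *: proj_coord f x + proj_coord f y.
Proof.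
rewrite /proj_coord scalemxAl -mulmxDl; congr (_ *m _).
by apply/rowP => m; rewrite !mxE ipE.
Qed.

Lemma proj_coord_basis n (f : 'I_n -> V) i : vec_indep f ->
  proj_coord f (f i) = row i 1%:M.
Proof.
move=> hf; rewrite -(mulmxV (gram_unit hf)) row_mul; congr (_ *m _).
by apply/rowP => m; rewrite !mxE.
Qed.

Lemma proj_coord_ip n (f : 'I_n -> V) x i : vec_indep f ->
  \sum_(k < n) proj_coord f x 0 k * ip (f k) (f i) = ip x (f i).
Proof.
move=> hf; have := congr1 (fun M : 'rV_n => M 0 i)
  (mulmxKV (gram_unit hf) (\row_m ip x (f m))).
rewrite mxE [RHS]mxE => <-.
by apply: eq_bigr => k _; rewrite [gram f _ _]mxE.
Qed.

Lemma proj_coord_bound n (f : 'I_n -> V) k :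
  exists2 M, 0 <= M & forall x, `|proj_coord f x 0 k| <= M * `|x|.
Proof.
exists (\sum_(m < n) `|f m| * `|invmx (gram f) m k|) => [|x].
  by apply: sumr_ge0 => m _; rewrite mulr_ge0.
rewrite mxE mulr_suml; apply: le_trans (ler_norm_sum _ _ _) _.
apply: ler_sum => m _; rewrite mxE normrM mulrAC ler_wpM2r // mulrC.
exact: cauchy_schwarz.
Qed.

Lemma dual_basis_ip n (f : 'I_n -> V) l j : vec_indep f ->
  ip (dual_basis f l) (f j) = (l == j)%:R.
Proof.
move=> hf; have := congr1 (fun M : 'M[K]_n => M l j) (mulVmx (gram_unit hf)).
rewrite mxE [RHS]mxE => <-.
by rewrite ip_suml; apply: eq_bigr => m _; rewrite [gram f _ _]mxE.
Qed.

Lemma orth_decomp n (f : 'I_n -> V) x : vec_indep f ->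
  exists u v, [/\ x = u + v, span_vec f u & orth_compl ip (span_vec f) v].
Proof.
move=> hf; set u := \sum_(k < n) proj_coord f x 0 k *: f k.
exists u, (x - u); split; [by rewrite addrC subrK | by exists (proj_coord f x 0) |].
move=> w [a ->]; rewrite ip_suml big1 // => i _.
by rewrite ipC ipBl ip_suml proj_coord_ip // subrr conj0 mulr0.
Qed.

End InnerProduct.

(** * Operators attaining their norm exactly on the unit sphere of H0 *)

Section SmoothOperator.
Variables (V1 V2 : normedModType K) (ip1 : V1 -> V1 -> K) (ip2 : V2 -> V2 -> K).
Variables (T : V1 -> V2) (n : nat) (e : 'I_n -> V1) (s : K).
Hypotheses (Hip1 : inner_product conj ip1) (Hip2 : inner_product conj ip2).
Hypotheses (HTb : bdd_op T) (HT1 : opnorm_is T 1) (He : vec_indep e).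
Hypothesis HM :
  [set x | `|x| = 1 /\ `|T x| = 1] = [set x | span_vec e x /\ `|x| = 1].
Hypotheses (Hs1 : s < 1) (Hs : is_lub [set r | exists y,
  orth_compl ip1 (span_vec e) y /\ `|y| <= 1 /\ r = `|T y|] s).

Local Notation H0 := (span_vec e).
Local Notation H0perp := (orth_compl ip1 (span_vec e)).

Let lT : lin_map T := bdd_op_lin HTb.

Definition perturb_const (M : K) := M ^+ 2 *+ 2 / (1 - s).

Lemma perturb_const_ge0 M : 0 <= M -> 0 <= perturb_const M.
Proof. by move=> M0; rewrite divr_ge0 ?mulrn_wge0 ?exprn_ge0 // subr_ge0 ltW. Qed.

Lemma normT_le x : `|T x| <= `|x|.
Proof.
have ball x' : setT x' -> `|x'| <= 1 -> `|T x'| <= 1.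
  by move=> _ x1; case: HT1 => ub _; apply: ub; exists x'.
by have := lin_map_cone_bound lT (fun _ _ _ => I) ball (x := x) I; rewrite mul1r.
Qed.

Lemma s_ge0 : 0 <= s.
Proof.
case: Hs => ub _; apply: ub; exists 0.
by rewrite normr0 lin_map0 // normr0; split=> //; exact: orth_compl0.
Qed.

Lemma normT_perp_le v : H0perp v -> `|T v| <= s * `|v|.
Proof.
move=> Hv; apply: (lin_map_cone_bound lT (orth_complZ Hip1) _ Hv) => y Hy y1.
by case: Hs => ub _; apply: ub; exists y.
Qed.

Lemma normT_span u : H0 u -> `|T u| = `|u|.
Proof.
move=> Hu; have [->|u0] := eqVneq u 0; first by rewrite lin_map0 // !normr0.
have [u1 {1}->] := unit_direction u0.
suff : [set x | span_vec e x /\ `|x| = 1] (`|u|^-1 *: u).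
  by rewrite -HM => -[_ Ty]; rewrite lin_mapZ // normrZ Ty normr_id mulr1.
by split=> //; exact: span_vecZ.
Qed.

Lemma T_span_perp u v : H0 u -> H0perp v -> ip2 (T v) (T u) = 0.
Proof.
(* Compare |T (u + eps v)| <= |u + eps v| for eps = t conj z: this yields
   2 t |z|^2 <= t^2 |z|^2 |v|^2 for all t > 0. *)
move=> Hu Hv; have vu : ip1 v u = 0 by rewrite (ipC Hip1) Hv // conj0.
set z := ip2 (T v) (T u).
suff : `|z| ^+ 2 *+ 2 = 0.
  by move/eqP; rewrite mulrn_eq0 /= sqrf_eq0 normr_eq0 => /eqP.
apply: (eq0_le_mul_pos (b := `|z| ^+ 2 * `|v| ^+ 2)) => [||t t0].
- by rewrite mulrn_wge0 ?exprn_ge0.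
- by rewrite mulr_ge0 ?exprn_ge0.
have tz := mulr_ge0 (ltW t0) (exprn_ge0 2 (normr_ge0 z)).
have : `|T (u + (t * conj z) *: v)| ^+ 2 <= `|u + (t * conj z) *: v| ^+ 2.
  by rewrite lerXn2r ?nnegrE ?normT_le.
rewrite lin_mapD // lin_mapZ // (normD_sqr Hip2) (normD_sqr Hip1).
rewrite (ipZl Hip1) vu mulr0 conj0 addr0 (ipZl Hip2) -/z normT_span //.
rewrite -mulrA [conj z * z]mulrC mul_conj (conj_ge0 tz) !normrZ.
rewrite norm_conj (gtr0_norm t0) addr0 -!addrA lerD2l -mulr2n => h.
rewrite -(ler_pM2l t0); apply: le_trans (le_trans h _).
  rewrite mulrnAr lerDr; apply: exprn_ge0.
  by rewrite !mulr_ge0 // ltW.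
by rewrite [X in _ <= X](_ : _ = (t * `|z| * `|v|) ^+ 2) //; ring.
Qed.

Section Perturbation.
Variables (B : V1 -> V2) (M : K).
Hypotheses (hB : bdd_op B) (M0 : 0 <= M) (hBM : forall y, `|B y| <= M * `|y|).
Hypothesis BT_orth : forall u, H0 u -> ip2 (B u) (T u) = 0.

Let lB : lin_map B := bdd_op_lin hB.

Lemma perturb_sqr_le t u v : 0 <= t -> H0 u -> H0perp v ->
  `|u| <= 1 -> `|u + v| <= 1 ->
  `|t *: B (u + v) + T (u + v)| ^+ 2
    <= `|u| ^+ 2 + (s * `|v| + t * M) ^+ 2 + (t * M * `|v|) *+ 2.
Proof.
move=> t0 Hu Hv u1 x1; set w := T v + t *: B (u + v).
have -> : t *: B (u + v) + T (u + v) = T u + w.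
  by rewrite /w (lin_mapD _ _ lT) addrCA [t *: _ + _]addrC.
have Bx : `|B (u + v)| <= M by rewrite (le_trans (hBM _)) // ler_piMr.
have hw : `|w| <= s * `|v| + t * M.
  rewrite (le_trans (ler_normD _ _)) // lerD ?normT_perp_le //.
  by rewrite normrZ ger0_norm // ler_wpM2l.
have ipw : ip2 w (T u) = t * ip2 (B v) (T u).
  rewrite /w (ipDl Hip2) T_span_perp // add0r (ipZl Hip2) lin_mapD //.
  by rewrite (ipDl Hip2) BT_orth // add0r.
rewrite (normD_sqr Hip2) ipw normT_span //; apply: lerD; first apply: lerD => //.
  by rewrite lerXn2r ?nnegrE // (le_trans _ hw).
apply: le_trans (add_conj_le _) _; rewrite lerMn2r /= normrM ger0_norm //.
rewrite -mulrA ler_wpM2l // (le_trans (cauchy_schwarz Hip2 _ _)) //.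
by rewrite normT_span // -[M * _]mulr1; apply: ler_pM; rewrite ?normr_ge0 ?hBM.
Qed.

Lemma norm_perturb_le t x : 0 <= t -> `|x| <= 1 ->
  `|t *: B x + T x| <= 1 + perturb_const M * t ^+ 2.
Proof.
move=> t0; have [u [v [-> Hu Hv]]] := orth_decomp Hip1 x He => x1.
have pyth : `|u + v| ^+ 2 = `|u| ^+ 2 + `|v| ^+ 2.
  by rewrite (normD_sqr Hip1) (ipC Hip1) Hv // !conj0 !addr0.
have := exprn_ile1 2 (normr_ge0 (u + v)) x1; rewrite pyth => uv1.
have u1 : `|u| <= 1.
  rewrite -(@ler_sqr _ _ 1) ?nnegrE // expr1n (le_trans _ uv1) // lerDl.
  exact: exprn_ge0.
set c := 1 + _ * t ^+ 2.
have c1 : 1 <= c by rewrite lerDl mulr_ge0 ?perturb_const_ge0 ?exprn_ge0.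
rewrite -(@ler_sqr _ _ c) ?nnegrE ?(le_trans ler01 c1) //.
apply: le_trans (perturb_sqr_le t0 Hu Hv u1 x1) _.
apply: le_trans (perturb_sqr_ineq _ _ _ _ uv1) (ler_peMl _ c1) => //.
- by rewrite s_ge0 Hs1.
- by rewrite (le_trans ler01 c1).
Qed.

Lemma op_ball_perturb t : 0 <= t ->
  op_ball (fun x => (1 + perturb_const M * t ^+ 2)^-1 *: (t *: B x + T x)).
Proof.
move=> t0; set c := 1 + _ * _.
have c0 : 0 < c by rewrite ltr_pwDl // mulr_ge0 ?perturb_const_ge0 ?exprn_ge0.
split=> [|x x1]; first by apply/bdd_opZ/bdd_op_comb.
rewrite normrZ ger0_norm ?invr_ge0 ?(ltW c0) // mulrC ler_pdivrMr // mul1r.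
exact: norm_perturb_le.
Qed.

End Perturbation.

Lemma J_eq0 (f : functional V1 V2) B : J T f -> bdd_op B ->
  (forall u, H0 u -> ip2 (B u) (T u) = 0) -> f B = 0.
Proof.
(* For B' = conj (f B) B, f (T + t B') = 1 + t |f B|^2 while
   |T + t B'| <= 1 + C t^2. *)
case=> lf [fub _] fT hB BT_orth; set z := f B.
pose B' x := conj z *: B x.
have hB' : bdd_op B' := bdd_opZ (conj z) hB.
have fB' : f B' = `|z| ^+ 2 by rewrite lin_functionalZ // mulrC mul_conj.
have B'T_orth u : H0 u -> ip2 (B' u) (T u) = 0.
  by move=> Hu; rewrite (ipZl Hip2) BT_orth // mulr0.
have [M M0 hBM] := bdd_op_bound hB'; set C := perturb_const M.
have C0 : 0 <= C := perturb_const_ge0 M0.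
suff : `|z| ^+ 2 = 0 by move/eqP; rewrite sqrf_eq0 normr_eq0 => /eqP.
apply: (eq0_le_mul_pos (exprn_ge0 2 (normr_ge0 z)) C0) => t t0.
have hD := op_ball_perturb hB' M0 hBM B'T_orth (ltW t0).
have := fub _ (ex_intro _ _ (Logic.conj hD erefl)); rewrite -/C.
have c0 : 0 < 1 + C * t ^+ 2 := ltr_wpDr (mulr_ge0 C0 (exprn_ge0 2 (ltW t0))) ltr01.
rewrite (lin_functionalZ _ lf (bdd_op_comb t hB' HTb)) (lf _ _ _ hB' HTb) fB' fT.
have b0 := addr_ge0 (mulr_ge0 (ltW t0) (exprn_ge0 2 (normr_ge0 z))) ler01.
have ci : 0 <= (1 + C * t ^+ 2)^-1 by rewrite invr_ge0 ltW.
rewrite (ger0_norm (mulr_ge0 ci b0)).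
rewrite mulrC ler_pdivrMr // mul1r addrC lerD2l => h.
by rewrite -(ler_pM2l t0) (_ : t * (t * C) = C * t ^+ 2) //; ring.
Qed.

Lemma T_op_ball : op_ball T.
Proof. by split=> // x x1; apply: le_trans (normT_le x) x1. Qed.

Definition quad (x : V1) : functional V1 V2 := fun A => ip2 (A x) (T x).

Definition op_entry (i j : 'I_n) : functional V1 V2 :=
  fun A => ip2 (A (e i)) (T (e j)).

Lemma quadZ a x A : lin_map A -> quad (a *: x) A = `|a| ^+ 2 * quad x A.
Proof.
move=> lA; rewrite /quad (lin_mapZ _ _ lA) (lin_mapZ _ _ lT).
by rewrite (ipZl Hip2) (ipZr Hip2) mulrA mul_conj.
Qed.

Lemma quadD x y A : lin_map A ->
  quad (x + y) A = quad x A + quad y A + (ip2 (A x) (T y) + ip2 (A y) (T x)).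
Proof.
move=> lA; rewrite /quad (lin_mapD _ _ lA) (lin_mapD _ _ lT) (ipDl Hip2) !(ipDr Hip2).
by ring.
Qed.

Lemma quad_in_J u : H0 u -> `|u| = 1 -> J T (quad u).
Proof.
move=> Hu u1; have Tu1 : quad u T = 1.
  by rewrite /quad (ipxx Hip2) normT_span // u1 expr1n.
split=> //; first by move=> a A B _ _; rewrite /quad (ipE Hip2).
split=> [r [A [[_ A1] ->]]|b ub].
  rewrite (le_trans (cauchy_schwarz Hip2 _ _)) // normT_span // u1 mulr1.
  by rewrite A1 ?u1.
by have := ub _ (ex_intro _ T (Logic.conj T_op_ball erefl)); rewrite Tu1 normr1.
Qed.

Lemma quad_in_span x : H0 x -> in_span (J T) (quad x).
Proof.
move=> Hx; have [->|x0] := eqVneq x 0.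
  apply: in_span_eq (in_span0 _) _ => A /bdd_op_lin lA.
  by rewrite /quad lin_map0 // (ip0l Hip2).
have [x1 ->] := unit_direction x0.
apply: in_span_eq (in_spanZ (`| `|x| | ^+ 2)
  (in_span_mem (quad_in_J (span_vecZ _ Hx) x1))) _.
by move=> A /bdd_op_lin lA; rewrite [LHS]quadZ.
Qed.

Lemma op_entry_in_span_real i j :
  in_span (J T) (fun A => op_entry i j A + op_entry j i A).
Proof.
have [Hx Hy] := (span_vec_mem e i, span_vec_mem e j).
have := in_span_comb 1 (quad_in_span (span_vecD Hx Hy)) (in_span_comb (-1)
  (quad_in_span Hx) (in_spanZ (-1) (quad_in_span Hy))).
by move/in_span_eq; apply=> A /bdd_op_lin lA; rewrite quadD // /op_entry; ring.
Qed.

Lemma op_entry_in_span_complex ii i j : conj ii = - ii -> ii * ii = -1 ->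
  in_span (J T) (op_entry i j).
Proof.
(* 2 <A x, T y> = q (x + y) + ii q (x + ii y) - (1 + ii) (q x + q y). *)
move=> iiC ii2; have [Hx Hy] := (span_vec_mem e i, span_vec_mem e j).
have Hiy := span_vecZ ii Hy.
have := in_spanZ 2^-1 (in_span_comb 1 (quad_in_span (span_vecD Hx Hy))
  (in_span_comb ii (quad_in_span (span_vecD Hx Hiy)) (in_spanZ (- (1 + ii))
  (in_span_comb 1 (quad_in_span Hx) (quad_in_span Hy))))).
move/in_span_eq; apply=> A /bdd_op_lin lA.
rewrite !quadD // quadZ // -mul_conj (lin_mapZ _ _ lA) (lin_mapZ _ _ lT).
rewrite (ipZl Hip2) (ipZr Hip2) iiC.
by rewrite /op_entry /quad; field: ii2.
Qed.

Lemma quad_span_sum (c : 'I_n -> K) A : lin_map A ->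
  quad (\sum_(i < n) c i *: e i) A
    = \sum_(i < n) \sum_(j < n) c i * conj (c j) * op_entry i j A.
Proof.
move=> lA; rewrite /quad (lin_map_sum _ _ _ lA) (lin_map_sum _ _ _ lT) (ip_suml Hip2).
apply: eq_bigr => i _; rewrite (ip_sumr Hip2) mulr_sumr.
by apply: eq_bigr => j _; rewrite mulrA.
Qed.

Lemma T_basis_indep : vec_indep (fun m => T (e m)).
Proof.
move=> c hc; apply: He; apply/eqP; rewrite -normr_eq0 -normT_span; last by exists c.
by rewrite (lin_map_sum _ _ _ lT) hc normr0.
Qed.

Definition rank_one (k l : 'I_n) : V1 -> V2 :=
  fun x => proj_coord ip1 e x 0 k *: dual_basis ip2 (fun m => T (e m)) l.

Lemma rank_one_bdd k l : bdd_op (rank_one k l).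
Proof.
split=> [a x y|].
  by rewrite /rank_one (proj_coordD Hip1) !mxE scalerDl scalerA.
have [M M0 hM] := proj_coord_bound Hip1 e k.
exists (M * `|dual_basis ip2 (fun m => T (e m)) l|) => x.
by rewrite /rank_one normrZ mulrAC ler_wpM2r.
Qed.

Lemma op_entry_rank_one i j k l :
  op_entry i j (rank_one k l) = (i == k)%:R * (l == j)%:R.
Proof.
rewrite /op_entry /rank_one (ipZl Hip2) (proj_coord_basis Hip1) // mxE.
by rewrite (dual_basis_ip Hip2 _ _ T_basis_indep) mxE eq_sym.
Qed.

Lemma op_entryZ i j a A : op_entry i j (fun x => a *: A x) = a * op_entry i j A.
Proof. exact: ipZl. Qed.

Definition sym_rank_one (k l : 'I_n) : V1 -> V2 :=
  if k == l then fun x => 2^-1 *: rank_one k k x else rank_one k l.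

Lemma sym_rank_one_bdd k l : bdd_op (sym_rank_one k l).
Proof.
by rewrite /sym_rank_one; case: eqP => _; [apply: bdd_opZ|]; exact: rank_one_bdd.
Qed.

Lemma sym_op_entry_rank_one (i j k l : 'I_n) : (j <= i)%N -> (l <= k)%N ->
  op_entry i j (sym_rank_one k l) + op_entry j i (sym_rank_one k l)
    = ((i, j) == (k, l))%:R.
Proof.
move=> ji lk; rewrite /sym_rank_one xpair_eqE; have [<-|kl] := eqVneq k l.
  rewrite !op_entryZ !op_entry_rank_one -!natrM !mulnb.
  rewrite [k == j]eq_sym [k == i]eq_sym [(j == k) && _]andbC.
  by case: (_ && _); rewrite ?mulr0 ?addr0 //; field.
rewrite !op_entry_rank_one -!natrM !mulnb [l == j]eq_sym.
suff -> : (j == k) && (l == i) = false by rewrite addr0.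
apply/negbTE/negP => /andP[/eqP jk /eqP li]; move/negP: kl; apply.
by rewrite -val_eqE /= eqn_leq lk andbT -jk li.
Qed.

Lemma dim_span_complex ii : conj ii = - ii -> ii * ii = -1 ->
  dim_span_is (J T) (n ^ 2).
Proof.
move=> iiC ii2.
have -> : (n ^ 2)%N = #|{: 'I_n * 'I_n}| by rewrite card_prod card_ord mulnn.
apply: (dim_span_is_biorthogonal (g := fun p => op_entry p.1 p.2)
  (S := fun p => rank_one p.1 p.2)).
- by move=> f [].
- by move=> p a A B _ _; rewrite /op_entry (ipE Hip2).
- by move=> p; exact: rank_one_bdd.
- move=> [i j] [k l]; rewrite op_entry_rank_one -natrM mulnb xpair_eqE.
  by rewrite [l == j]eq_sym.
- by move=> p; exact: (op_entry_in_span_complex _ _ iiC ii2).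
move=> f A Jf hA entry0; apply: J_eq0 => // _ [c ->].
apply: eq_trans (quad_span_sum c (bdd_op_lin hA)) _.
by rewrite big1 // => i _; rewrite big1 // => j _; rewrite (entry0 (i, j)) mulr0.
Qed.

Lemma dim_span_real : (forall a, conj a = a) -> dim_span_is (J T) 'C(n.+1, 2).
Proof.
move=> conj_id; rewrite -card_lower_triangle.
apply: (dim_span_is_biorthogonal
  (g := fun p : {p : 'I_n * 'I_n | (p.2 <= p.1)%N} =>
          fun A => op_entry (val p).1 (val p).2 A + op_entry (val p).2 (val p).1 A)
  (S := fun p => sym_rank_one (val p).1 (val p).2)).
- by move=> f [].
- move=> p a A B _ _; rewrite /op_entry !(ipE Hip2).
  by rewrite mulrDr -!addrA; congr (_ + _); rewrite addrCA.
- by move=> p; exact: sym_rank_one_bdd.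
- by move=> [[i j] ji] [[k l] lk]; rewrite sym_op_entry_rank_one.
- by move=> p; exact: op_entry_in_span_real.
move=> f A Jf hA entry0; apply: J_eq0 => // _ [c ->].
apply: eq_trans (quad_span_sum c (bdd_op_lin hA)) _.
under eq_bigr do under eq_bigr do rewrite conj_id.
apply: sum_antisym_quad0 => i j; have [ji|/ltnW ij] := leqP j i.
  exact: (entry0 (exist _ (i, j) ji)).
by rewrite addrC; exact: (entry0 (exist _ (j, i) ij)).
Qed.

End SmoothOperator.

Section Smoothness.
Variables (V1 V2 : normedModType K) (ip1 : V1 -> V1 -> K) (ip2 : V2 -> V2 -> K).
Variables (T : V1 -> V2) (n : nat) (e : 'I_n -> V1).

Lemma k_smooth_real : (forall a, conj a = a) ->
  thm2p1_hyp conj ip1 ip2 T e -> k_smooth T 'C(n.+1, 2).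
Proof.
move=> conj_id [[Hip1 Hip2] [HTb HT1] He HM [s [Hs1 Hs]]]; split=> //.
exact: dim_span_real Hip1 Hip2 HTb HT1 He HM Hs1 Hs conj_id.
Qed.

Lemma k_smooth_complex ii : conj ii = - ii -> ii * ii = -1 ->
  thm2p1_hyp conj ip1 ip2 T e -> k_smooth T (n ^ 2).
Proof.
move=> iiC ii2 [[Hip1 Hip2] [HTb HT1] He HM [s [Hs1 Hs]]]; split=> //.
exact: dim_span_complex Hip1 Hip2 HTb HT1 He HM Hs1 Hs _ iiC ii2.
Qed.

End Smoothness.
End Conjugation.

Theorem theorem2p1 :
  (forall (R : realType) (V1 V2 : completeNormedModType R)
      (ip1 : V1 -> V1 -> R) (ip2 : V2 -> V2 -> R) (T : V1 -> V2)
      (n : nat) (e : 'I_n -> V1),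
      thm2p1_hyp (fun z : R => z) ip1 ip2 T e ->
      k_smooth T 'C(n.+1, 2)) /\
  (forall (R : realType) (V1 V2 : completeNormedModType R[i])
      (ip1 : V1 -> V1 -> R[i]) (ip2 : V2 -> V2 -> R[i]) (T : V1 -> V2)
      (n : nat) (e : 'I_n -> V1),
      thm2p1_hyp (@Num.conj _) ip1 ip2 T e ->
      k_smooth T (n ^ 2)%N).
Proof.
split=> R V1 V2 ip1 ip2 T n e.
  by apply: (k_smooth_real (conjugation_id R) (fun _ => erefl)).
by apply: (k_smooth_complex (conjugation_conjC _) (conjCi _) (mulCii _)).
Qed.
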